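(* For any compilation chain for partial programs and any trace relation ${\sim}\subseteq\mathit{Trace}_S\times\mathit{Trace}_T$ with existential and universal images $\tilde\tau,\tilde\sigma$ (lifted to hyperproperties), $\mathit{RHC}^{\sim}$ is equivalent to $\mathit{RHP}^{\tilde\tau}$. Moreover, if $\tilde\tau\circ\tilde\sigma=\mathrm{id}$ (a Galois insertion), then $\mathit{RHC}^{\sim}$ implies $\mathit{RHP}^{\tilde\sigma}$; and if $\tilde\sigma\circ\tilde\tau=\mathrm{id}$ (a Galois reflection), then $\mathit{RHP}^{\tilde\sigma}$ implies $\mathit{RHC}^{\sim}$. Here $\mathit{RHC}^{\sim}\equiv\forall P\ \forall C_T\ \exists C_S\ \forall t.\ C_T[P{\downarrow}]\rightsquigarrow t\iff(\exists s\sim t.\ C_S[P]\rightsquigarrow s)$; $\mathit{RHP}^{\tilde\tau}\equiv\forall P\ \forall H_S.\ P\models_R H_S\Rightarrow P{\downarrow}\models_R\tilde\tau(H_S)$; $\mathit{RHP}^{\tilde\sigma}\equiv\forall P\ \forall H_T.\ P\models_R\tilde\sigma(H_T)\Rightarrow P{\downarrow}\models_R H_T$.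
   Context: A compilation chain for partial programs consists of source partial programs $P$ and source contexts $C_S$, target partial programs and target contexts $C_T$, linking $C[P]$ into whole programs, sets $\mathit{Trace}_S,\mathit{Trace}_T$ of traces, semantics relations $W\rightsquigarrow t$ for whole programs, and a compiler $P\mapsto P{\downarrow}$. $\mathit{beh}(W)=\{t\mid W\rightsquigarrow t\}$. A hyperproperty is a set of sets of traces; $P\models_R H$ iff for every context $C$ at the same level, $\mathit{beh}(C[P])\in H$. The existential image of $\sim$ is $\tilde\tau(\pi)=\{t\mid\exists s.\ s\sim t\wedge s\in\pi\}$ and its universal image is $\tilde\sigma(\pi)=\{s\mid\forall t.\ s\sim t\Rightarrow t\in\pi\}$; on hyperproperties, $\tilde\tau(H_S)=\{\tilde\tau(\pi)\mid\pi\in H_S\}$ and $\tilde\sigma(H_T)=\{\tilde\sigma(\pi)\mid\pi\in H_T\}$. The identities $\tilde\tau\circ\tilde\sigma=\mathrm{id}$, $\tilde\sigma\circ\tilde\tau=\mathrm{id}$ refer to the maps on trace properties. *)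

Set Implicit Arguments.

Record chain : Type := {
  progS : Type;
  ctxS : Type;
  progT : Type;
  ctxT : Type;
  wholeS : Type;
  wholeT : Type;
  traceS : Type;
  traceT : Type;
  plugS : ctxS -> progS -> wholeS;
  plugT : ctxT -> progT -> wholeT;
  semS : wholeS -> traceS -> Prop;
  semT : wholeT -> traceT -> Prop;
  compile : progS -> progT
}.

Definition prop (T : Type) := T -> Prop.
Definition hprop (T : Type) := prop T -> Prop.

Section Chain.
Variable L : chain.

Definition behS (W : wholeS L) : prop (traceS L) := fun s => semS L W s.
Definition behT (W : wholeT L) : prop (traceT L) := fun t => semT L W t.

Definition rsatS (P : progS L) (H : hprop (traceS L)) : Prop :=
  forall C : ctxS L, H (behS (plugS L C P)).
Definition rsatT (P : progT L) (H : hprop (traceT L)) : Prop :=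
  forall C : ctxT L, H (behT (plugT L C P)).

Variable rel : traceS L -> traceT L -> Prop.

Definition tau_img (pi : prop (traceS L)) : prop (traceT L) :=
  fun t => exists s, rel s t /\ pi s.
Definition sigma_img (pi : prop (traceT L)) : prop (traceS L) :=
  fun s => forall t, rel s t -> pi t.

Definition tau_himg (H : hprop (traceS L)) : hprop (traceT L) :=
  fun pi' => exists pi, H pi /\ pi' = tau_img pi.
Definition sigma_himg (H : hprop (traceT L)) : hprop (traceS L) :=
  fun pi' => exists pi, H pi /\ pi' = sigma_img pi.

Definition RHC : Prop :=
  forall (P : progS L) (CT : ctxT L), exists CS : ctxS L, forall t : traceT L,
    semT L (plugT L CT (compile L P)) t <->
    (exists s, rel s t /\ semS L (plugS L CS P) s).

Definition RHP_tau : Prop :=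
  forall (P : progS L) (HS : hprop (traceS L)),
    rsatS P HS -> rsatT (compile L P) (tau_himg HS).

Definition RHP_sigma : Prop :=
  forall (P : progS L) (HT : hprop (traceT L)),
    rsatS P (sigma_himg HT) -> rsatT (compile L P) HT.

End Chain.

(* RHC^~ says that every target context C_T is simulated by some source
   context C_S, in the sense that beh(C_T[P↓]) = tau~(beh(C_S[P])).  This is
   exactly what RHP^tau~ yields for the strongest hyperproperty robustly
   satisfied by P, namely the set of behaviours {beh(C_S[P]) | C_S}; and
   conversely it transports every robustly satisfied H_S along tau~.  The
   statements about RHP^sigma~ reduce to RHP^tau~: under a Galois insertion
   tau~(sigma~(H_T)) is contained in H_T, and under a Galois reflection H_S is
   contained in sigma~(tau~(H_S)). *)
From Stdlib Require Import FunctionalExtensionality PropExtensionality.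

Lemma prop_ext (T : Type) (p q : prop T) : (forall x, p x <-> q x) -> p = q.
Proof.
  intros Hpq; apply functional_extensionality; intros x.
  apply propositional_extensionality; apply Hpq.
Qed.

Section RobustPreservation.
Variable L : chain.
Variable rel : traceS L -> traceT L -> Prop.

Lemma rsatS_sub {P : progS L} {H H' : hprop (traceS L)} :
  (forall pi, H pi -> H' pi) -> rsatS L P H -> rsatS L P H'.
Proof. intros HH' Hsat C; apply HH', Hsat. Qed.

Lemma rsatT_sub {P : progT L} {H H' : hprop (traceT L)} :
  (forall pi, H pi -> H' pi) -> rsatT L P H -> rsatT L P H'.
Proof. intros HH' Hsat C; apply HH', Hsat. Qed.

Definition beh_hprop (P : progS L) : hprop (traceS L) :=
  fun pi => exists CS, pi = behS L (plugS L CS P).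

Lemma rsatS_beh_hprop (P : progS L) : rsatS L P (beh_hprop P).
Proof. intros CS; exists CS; reflexivity. Qed.

Lemma RHC_behE :
  RHC L rel <->
  forall (P : progS L) (CT : ctxT L), exists CS : ctxS L,
    behT L (plugT L CT (compile L P)) = tau_img L rel (behS L (plugS L CS P)).
Proof.
  split; intros HR P CT; destruct (HR P CT) as [CS HCS]; exists CS.
  - apply prop_ext; exact HCS.
  - intros t; change (behT L (plugT L CT (compile L P)) t <->
                      tau_img L rel (behS L (plugS L CS P)) t).
    rewrite HCS; reflexivity.
Qed.

Lemma RHC_RHP_tau : RHC L rel -> RHP_tau L rel.
Proof.
  rewrite RHC_behE; intros HR P HS Hsat CT.
  destruct (HR P CT) as [CS HCS].
  exists (behS L (plugS L CS P)); split; [apply Hsat | exact HCS].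
Qed.

Lemma RHP_tau_RHC : RHP_tau L rel -> RHC L rel.
Proof.
  rewrite RHC_behE; intros HR P CT.
  destruct (HR P _ (rsatS_beh_hprop P) CT) as [pi [[CS ->] HCT]].
  exists CS; exact HCT.
Qed.

Lemma tau_sigma_himg_sub :
  (forall pi : prop (traceT L), tau_img L rel (sigma_img L rel pi) = pi) ->
  forall (HT : hprop (traceT L)) pi,
    tau_himg L rel (sigma_himg L rel HT) pi -> HT pi.
Proof.
  intros Hins HT pi [pi' [[pi'' [HTpi'' ->]] ->]].
  rewrite Hins; exact HTpi''.
Qed.

Lemma sigma_tau_himg_sup :
  (forall pi : prop (traceS L), sigma_img L rel (tau_img L rel pi) = pi) ->
  forall (HS : hprop (traceS L)) pi,
    HS pi -> sigma_himg L rel (tau_himg L rel HS) pi.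
Proof.
  intros Hrefl HS pi HSpi.
  exists (tau_img L rel pi); split.
  - exists pi; split; [exact HSpi | reflexivity].
  - symmetry; apply Hrefl.
Qed.

Lemma RHP_tau_RHP_sigma :
  (forall pi : prop (traceT L), tau_img L rel (sigma_img L rel pi) = pi) ->
  RHP_tau L rel -> RHP_sigma L rel.
Proof.
  intros Hins HR P HT Hsat.
  apply (rsatT_sub (tau_sigma_himg_sub Hins HT)), HR, Hsat.
Qed.

Lemma RHP_sigma_RHP_tau :
  (forall pi : prop (traceS L), sigma_img L rel (tau_img L rel pi) = pi) ->
  RHP_sigma L rel -> RHP_tau L rel.
Proof.
  intros Hrefl HR P HS Hsat.
  apply HR, (rsatS_sub (sigma_tau_himg_sup Hrefl HS)), Hsat.
Qed.

End RobustPreservation.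

Theorem theorem5p3 (L : chain) (rel : traceS L -> traceT L -> Prop) :
  (@RHC L rel <-> @RHP_tau L rel) /\
  ((forall pi : prop (traceT L), @tau_img L rel (@sigma_img L rel pi) = pi) ->
     @RHC L rel -> @RHP_sigma L rel) /\
  ((forall pi : prop (traceS L), @sigma_img L rel (@tau_img L rel pi) = pi) ->
     @RHP_sigma L rel -> @RHC L rel).
Proof.
  split; [| split].
  - split; [apply RHC_RHP_tau | apply RHP_tau_RHC].
  - intros Hins HR; apply RHP_tau_RHP_sigma, RHC_RHP_tau; assumption.
  - intros Hrefl HR; apply RHP_tau_RHC, RHP_sigma_RHP_tau; assumption.
Qed.
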